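(* Let $\sigma=(\sigma_1,\dots,\sigma_N):\Delta_d\to\mathbb{R}^N$ be continuous and of class $C^1$ on every open face of $\Delta_d$. Then $\sigma$ has finite volume if and only if for every subset $\{i_1,\dots,i_d\}\subset\{1,\dots,N\}$ the integral $\int_{\Delta_d}\sigma^*(\mathrm{d}x_{i_1}\wedge\dots\wedge\mathrm{d}x_{i_d})$ converges absolutely.
   Context: The standard $d$-simplex is $\Delta_d=\{(a_1,\dots,a_d)\in\mathbb{R}^d\mid a_i\ge 0,\ \sum a_i\le 1\}$. An open face of $\Delta_d$ is the interior of a face (of any dimension) of $\Delta_d$. The pull-back $\sigma^*(\omega)$ of a form is defined on the interior of $\Delta_d$, where $\sigma$ is $C^1$. Such a $\sigma$ is said to have finite volume if $\int_{\Delta_d}\sigma^*(\omega)$ converges absolutely for every continuous $d$-form $\omega$ on $\sigma(\Delta_d)$. *)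

From HB Require Import structures.
From mathcomp Require Import all_boot all_order all_algebra.
From mathcomp Require Import all_classical all_reals all_analysis.
Set Implicit Arguments. Unset Strict Implicit. Unset Printing Implicit Defensive.
Import Order.TTheory GRing.Theory Num.Theory.
Import numFieldNormedType.Exports.
Local Open Scope classical_set_scope.
Local Open Scope ring_scope.

Definition simplex (R : realType) (d : nat) : set 'rV[R]_d :=
  [set a | (forall i, 0 <= a ord0 i) /\ \sum_i a ord0 i <= 1].

Definition simplex_int (R : realType) (d : nat) : set 'rV[R]_d :=
  [set a | (forall i, 0 < a ord0 i) /\ \sum_i a ord0 i < 1].

(* Vertices e_0 = 0, e_{l+1} = l-th unit vector. *)
Definition vtx (R : realType) (d : nat) (v : 'I_d.+1) : 'rV[R]_d :=
  \row_l (if v == lift ord0 l then 1 else 0).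

(* Affine parametrization of the affine hull of the face spanned by the
   vertex set S (with #|S| = k.+1, vertices v_0,...,v_k listed by enum S):
   s |-> v_0 + sum_j s_j (v_{j+1} - v_0).  It maps the open standard
   k-simplex bijectively onto the open face of S. *)
Definition face_param (R : realType) (d : nat) (S : {set 'I_d.+1})
  (s : 'rV[R]_(#|S|.-1)) : 'rV[R]_d :=
  let v j := @vtx R d (nth ord0 (enum S) j) in
  v 0%N + \sum_(j < #|S|.-1) s ord0 j *: (v j.+1 - v 0%N).

Definition C1_on (R : realType) (k N : nat) (U : set 'rV[R]_k)
  (f : 'rV[R]_k -> 'rV[R]_N) : Prop :=
  (forall x, U x -> differentiable f x) /\
  (forall w : 'rV[R]_k, {within U, continuous (fun x => 'd f x w)}).

Definition C1_on_face (R : realType) (d N : nat) (sigma : 'rV[R]_d -> 'rV[R]_N)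
  (S : {set 'I_d.+1}) : Prop :=
  C1_on (@simplex_int R (#|S|.-1)) (sigma \o @face_param R d S).

(* Iterated Lebesgue integral over R^d (Tonelli order: first coordinate
   outermost); for R^0 the (point) measure. *)
Fixpoint iint (R : realType) (d : nat) : ('rV[R]_d -> \bar R) -> \bar R :=
  match d with
  | 0%N => fun f => f 0
  | d'.+1 => fun f =>
      (\int[@lebesgue_measure R]_x iint (fun v : 'rV[R]_d' =>
           f (row_mx (\row_(_ < 1) x) v)))%E
  end.

Definition abs_conv (R : realType) (d : nat) (F : 'rV[R]_d -> R) : Prop :=
  (iint (fun a => (\1_(@simplex_int R d) a * `|F a|)%:E) < +oo)%E.

(* Strictly increasing index maps I : {0..d-1} -> {0..N-1}, i.e.
   subsets {i_1 < ... < i_d} of {1..N}. *)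
Definition increasing (d N : nat) (I : {ffun 'I_d -> 'I_N}) : bool :=
  [forall j : 'I_d, forall k : 'I_d, (j < k)%N ==> (I j < I k)%N].

Definition jac_minor (R : realType) (d N : nat) (sigma : 'rV[R]_d -> 'rV[R]_N)
  (I : {ffun 'I_d -> 'I_N}) (a : 'rV[R]_d) : 'M[R]_d :=
  \matrix_(j, l) ('d sigma a (delta_mx ord0 l)) ord0 (I j).

(* sigma^*(dx_{i_1} /\ ... /\ dx_{i_d}) = det(Jacobian minor) da_1../\da_d *)
Definition pullback_dx (R : realType) (d N : nat) (sigma : 'rV[R]_d -> 'rV[R]_N)
  (I : {ffun 'I_d -> 'I_N}) (a : 'rV[R]_d) : R :=
  \det (jac_minor sigma I a).

(* Pullback of the d-form omega = sum_{I increasing} f_I dx_I. *)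
Definition pullback (R : realType) (d N : nat) (sigma : 'rV[R]_d -> 'rV[R]_N)
  (f : {ffun 'I_d -> 'I_N} -> 'rV[R]_N -> R) (a : 'rV[R]_d) : R :=
  \sum_(I | increasing I) f I (sigma a) * pullback_dx sigma I a.

Definition finite_volume (R : realType) (d N : nat)
  (sigma : 'rV[R]_d -> 'rV[R]_N) : Prop :=
  forall f : {ffun 'I_d -> 'I_N} -> 'rV[R]_N -> R,
    (forall I, increasing I -> {within sigma @` @simplex R d, continuous (f I)}) ->
    abs_conv (pullback sigma f).

(* The direct implication is the case of the forms dx_I themselves.  Conversely,
   the coefficients f_I of a continuous form on the compact set sigma(Delta_d)
   are bounded by constants M_I, so |sigma^* omega| <= sum_I M_I |sigma^* dx_I|
   on the open simplex, and it remains to integrate this bound term by term.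
   The iterated Lebesgue integral is additive only on measurable integrands.
   Here the integrands 1_{int Delta_d} |sigma^* dx_I| are lower semicontinuous,
   because sigma is C^1 on the open simplex, and by Fatou's lemma integrating out
   one variable preserves lower semicontinuity, so every partial integral is
   Borel measurable. *)

From HB Require Import structures.
From mathcomp Require Import all_boot all_order all_algebra.
From mathcomp Require Import all_classical all_reals all_analysis.
From mathcomp Require Import ring lra measurable_realfun.
Set Implicit Arguments. Unset Strict Implicit. Unset Printing Implicit Defensive.
Import Order.TTheory GRing.Theory Num.Theory.
Import numFieldNormedType.Exports.
Local Open Scope classical_set_scope.
Local Open Scope ring_scope.

Lemma continuous_pairl (X Y : topologicalType) (y : Y) :
  continuous (fun x : X => (x, y)).
Proof. by move=> x; apply: cvg_pair; [exact: cvg_id|exact: cvg_cst]. Qed.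

Lemma continuous_pairr (X Y : topologicalType) (x : X) :
  continuous (fun y : Y => (x, y)).
Proof. by move=> y; apply: cvg_pair; [exact: cvg_cst|exact: cvg_id]. Qed.

Lemma continuous_prod_map (X Y Z : topologicalType) (g : Y -> Z) :
  continuous g -> continuous (fun p : X * Y => (p.1, g p.2)).
Proof.
move=> cg [x y]; apply: cvg_pair; first exact: cvg_fst.
exact: (@continuous_comp _ _ _ snd g (x, y) (@cvg_snd _ _ _ _ _) (cg y)).
Qed.

Lemma continuous_mx (R : realType) (X : topologicalType) m n
    (f : X -> 'M[R]_(m, n)) :
  (forall i j, continuous (fun x => f x i j)) -> continuous f.
Proof.
move=> cf x A /= [P Px PA].
have : \forall y \near x, forall ij : 'I_m * 'I_n, P ij.1 ij.2 (f y ij.1 ij.2).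
  by apply: filter_forall => -[i j]; exact: cf.
by apply: filterS => y Py; apply: PA => i j; exact: (Py (i, j)).
Qed.

Lemma cvg_det (R : realType) (T : Type) (F : set_system T) (FF : Filter F) d
    (M : T -> 'M[R]_d) (A : 'M[R]_d) :
  (forall i j, (fun t => M t i j) @ F --> A i j) ->
  (fun t => \det (M t)) @ F --> \det A.
Proof.
move=> MA; apply: cvg_big => [|s _]; first exact: add_continuous.
apply: cvgM; first exact: cvg_cst.
apply: cvg_big => [|i _]; [exact: mul_continuous | exact: MA].
Qed.

Section lower_semicontinuous.
Context {R : realType}.
Local Open Scope ereal_scope.

Lemma lower_semicontinuous_comp (T U : topologicalType) (f : U -> \bar R)
    (g : T -> U) :
  continuous g -> lower_semicontinuous f -> lower_semicontinuous (f \o g).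
Proof.
move=> cg /lower_semicontinuousP lf; apply/lower_semicontinuousP => a.
exact: (open_comp (fun x _ => cg x) (lf a)).
Qed.

Lemma lower_semicontinuous_cst (T : topologicalType) (c : \bar R) :
  lower_semicontinuous (fun _ : T => c).
Proof. by move=> x a ac; exists setT; first exact: filterT. Qed.

Lemma lte_splitD (u v : \bar R) (a : R) : 0 <= u -> 0 <= v -> a%:E < u + v ->
  exists b c : R, [/\ a = (b + c)%R, b%:E < u & c%:E < v].
Proof.
case: u v => [r| |] [s| |] //= u0 v0; rewrite ?ltey //.
- rewrite -EFinD lte_fin => ars; pose e := ((r + s - a) / 2)%R.
  exists (r - e)%R, (s - e)%R; rewrite !lte_fin /e; split; lra.
- exists (r - 1)%R, (a - (r - 1))%R.
  by rewrite lte_fin ltey; split => //; [ring|lra].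
- exists (a - (s - 1))%R, (s - 1)%R.
  by rewrite lte_fin ltey; split => //; [ring|lra].
- by exists (a + 1)%R, (-1)%R; rewrite !ltey; split => //; ring.
Qed.

Lemma ge0_lower_semicontinuousD (T : topologicalType) (f g : T -> \bar R) :
  (forall x, 0 <= f x) -> (forall x, 0 <= g x) ->
  lower_semicontinuous f -> lower_semicontinuous g ->
  lower_semicontinuous (f \+ g).
Proof.
move=> f0 g0 lf lg x a /(lte_splitD (f0 x) (g0 x)) [b [c [-> bf cg]]].
have [V Vx Vb] := lf x b bf; have [W Wx Wc] := lg x c cg.
exists (V `&` W); first exact: filterI.
by move=> y [/Vb fy /Wc gy]; rewrite EFinD lteD.
Qed.

Lemma ge0_lower_semicontinuous_sum (T : topologicalType) (I : Type) (r : seq I)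
    (P : pred I) (F : I -> T -> \bar R) :
  (forall i x, 0 <= F i x) -> (forall i, lower_semicontinuous (F i)) ->
  lower_semicontinuous (fun x => \sum_(i <- r | P i) F i x).
Proof.
move=> F0 lF; elim: r => [|i r IH].
  under eq_fun do rewrite big_nil; exact: lower_semicontinuous_cst.
under eq_fun do rewrite big_cons.
case: (P i) => //; apply: ge0_lower_semicontinuousD => // x.
exact: sume_ge0.
Qed.

End lower_semicontinuous.

Lemma lower_semicontinuous_indic_norm (R : realType) (T : topologicalType)
    (U : set T) (F : T -> R) :
  open U -> {within U, continuous F} ->
  lower_semicontinuous (fun x => (\1_U x * `|F x|)%:E).
Proof.
move=> oU cF x a.
have indic_ge0 y : 0 <= \1_U y :> R by rewrite indicE.
have [Ux|nUx] := pselect (U x); last first.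
  rewrite indicE memNset // mul0r lte_fin => a0.
  exists setT; first exact: filterT.
  by move=> y _; rewrite lte_fin (lt_le_trans a0) // mulr_ge0.
rewrite indicE mem_set // mul1r lte_fin => aF.
have nearF := cvgr_gt _ (cvg_norm ((subspace_continuousP _ _).1 cF x Ux)) _ aF.
exists ([set y | U y -> a < `|F y|] `&` U).
  by apply: filterI; [exact: nearF | exact: open_nbhs_nbhs].
by move=> y [aFy Uy]; rewrite indicE mem_set // mul1r lte_fin; exact: aFy.
Qed.

Section liminf.
Context {R : realType}.
Local Open Scope ereal_scope.

Lemma lee_ltfin (z w : \bar R) :
  (forall b : R, b%:E < z -> b%:E <= w) -> z <= w.
Proof.
case: z => [r| |] zw; last by rewrite leNye.
- by apply/lee_subgt0Pr => e e0; apply: zw; rewrite lte_fin ltrBlDr ltrDl.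
- by rewrite (eq_infty (fun b => zw b (ltry b))).
Qed.

Lemma limn_einf_le (u : (\bar R)^nat) (a : \bar R) :
  (forall n, u n <= a) -> limn_einf u <= a.
Proof.
move=> ua; rewrite limn_einf_lim; apply: lime_le; first exact: is_cvg_einfs.
apply: nearW => n; apply: le_trans (ua n).
by apply: ereal_inf_lbound; exists n => /=.
Qed.

Lemma lower_semicontinuous_cvg (T : topologicalType) (f : T -> \bar R)
    (u : nat -> T) (x : T) :
  lower_semicontinuous f -> u n @[n --> \oo] --> x ->
  f x <= limn_einf (f \o u).
Proof.
move=> lf ux; apply: lee_ltfin => b /lf [V /ux [N _ NV] Vb].
rewrite limn_einf_lim; apply: lime_ge; first exact: is_cvg_einfs.
exists N => // n /= Nn; apply/ereal_infP => _ [k /= nk <-].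
by apply/ltW/Vb/NV; rewrite /= (leq_trans Nn nk).
Qed.

End liminf.

Section integral_lower_semicontinuous.
Context {R : realType}.
Local Open Scope ereal_scope.

(* Unlike [ge0_le_integral], no measurability is assumed. *)
Lemma ge0_le_integralT d (T : measurableType d) (mu : {measure set T -> \bar R})
    (f g : T -> \bar R) :
  (forall x, 0 <= f x) -> (forall x, f x <= g x) ->
  \int[mu]_x f x <= \int[mu]_x g x.
Proof.
move=> f0 fg; have g0 x : 0 <= g x by exact: le_trans (f0 x) (fg x).
rewrite !ge0_integralTE//; apply: le_ereal_sup => _ [h /= hf <-].
by exists h => //= x; exact: le_trans (hf x) (fg x).
Qed.

Lemma lower_semicontinuous_integral (T : pseudoMetricType R)
    (H : T * R -> \bar R) :
  (forall z, 0 <= H z) -> lower_semicontinuous H ->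
  lower_semicontinuous (fun t => \int[@lebesgue_measure R]_x H (t, x)).
Proof.
move=> H0 lH t a aH; apply: contrapT => noV.
(* Otherwise some [u n --> t] has [\int H (u n, _) <= a], and Fatou's lemma
   together with the lower semicontinuity of [H] yields [\int H (t, _) <= a]. *)
have near_le n : exists s,
    ball t n.+1%:R^-1%R s /\ \int[@lebesgue_measure R]_x H (s, x) <= a%:E.
  apply: contrapT => nex; apply: noV; exists (ball t n.+1%:R^-1%R).
    exact: nbhsx_ballx.
  by move=> s ts; rewrite ltNge; apply/negP => sa; apply: nex; exists s.
have [u Hu] := choice near_le.
have ut : u n @[n --> \oo] --> t.
  apply/cvg_ballP => e e0; near=> n.
  apply: (@le_ball _ _ _ n.+1%:R^-1%R); last exact: (Hu n).1.
  by apply/ltW; near: n; exact: (near_infty_natSinv_lt (PosNum e0)).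
have lHl (x : R) := lower_semicontinuous_comp (@continuous_pairl T R x) lH.
have lHr (s : T) := lower_semicontinuous_comp (@continuous_pairr T R s) lH.
have : \int[@lebesgue_measure R]_x H (t, x) <= a%:E.
  apply: le_trans (ge0_le_integralT (@lebesgue_measure R) (fun=> H0 _)
    (fun x => lower_semicontinuous_cvg (lHl x) ut)) _.
  apply: le_trans (fatou _ _ _ _) _ => //.
  - by move=> n; exact: lower_semicontinuous_measurable (lHr (u n)).
  - by move=> n x _; exact: H0.
  - by apply: limn_einf_le => n; exact: (Hu n).2.
by rewrite leNgt aH.
Unshelve. all: by end_near. Qed.

End integral_lower_semicontinuous.

Local Notation row_cons x v := (row_mx (\row_(_ < 1) x) v).

Section iterated_integral.
Context {R : realType}.

Lemma continuous_row_cons d :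
  continuous (fun p : R * 'rV[R]_d => row_cons p.1 p.2).
Proof.
apply: continuous_mx => i j; rewrite (ord1 i).
case: (split_ordP j) => k ->.
- under eq_fun do rewrite row_mxEl mxE.
  by case=> x v; exact: cvg_fst.
- under eq_fun do rewrite row_mxEr.
  move=> p; apply: (@continuous_comp _ _ _ snd (fun M : 'rV[R]_d => M 0 k)).
    by case: p => x v; exact: cvg_snd.
  exact: coord_continuous.
Qed.

Local Open Scope ereal_scope.

Lemma iint_ge0 d (f : 'rV[R]_d -> \bar R) : (forall x, 0 <= f x) -> 0 <= iint f.
Proof.
elim: d f => [|d IH] f f0 /=; first exact: f0.
by apply: integral_ge0 => x _; exact: IH.
Qed.

Lemma le_iint d (f g : 'rV[R]_d -> \bar R) :
  (forall x, 0 <= f x) -> (forall x, f x <= g x) -> iint f <= iint g.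
Proof.
elim: d f g => [|d IH] f g f0 fg /=; first exact: fg.
apply: ge0_le_integralT => x; first exact: iint_ge0.
exact: IH.
Qed.

Lemma iint0 d : iint (fun _ : 'rV[R]_d => 0) = 0.
Proof.
elim: d => [|d IH] //=.
by under eq_integral do rewrite IH; exact: integral0.
Qed.

Lemma lower_semicontinuous_iint d (T : pseudoMetricType R)
    (F : T * 'rV[R]_d -> \bar R) :
  (forall z, 0 <= F z) -> lower_semicontinuous F ->
  lower_semicontinuous (fun t => iint (fun v => F (t, v))).
Proof.
elim: d T F => [|d IH] T F F0 lF /=.
  by apply: lower_semicontinuous_comp lF; exact: continuous_pairl.
pose G (q : (T * R) * 'rV[R]_d) := F (q.1.1, row_cons q.1.2 q.2).
have lG : lower_semicontinuous G.
  apply: lower_semicontinuous_comp lF => q.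
  apply: (@continuous_comp _ _ _ (fun q => (q.1.1, (q.1.2, q.2)))
    (fun p => (p.1, row_cons p.2.1 p.2.2))); first exact: prodA_continuous.
  exact: continuous_prod_map (@continuous_row_cons d) _.
apply: (@lower_semicontinuous_integral _ _ (fun p => iint (fun v => G (p, v)))).
  by move=> p; apply: iint_ge0 => v; exact: F0.
by apply: IH => // q; exact: F0.
Qed.

Lemma measurable_iint_row_cons d (f : 'rV[R]_d.+1 -> \bar R) :
  (forall x, 0 <= f x) -> lower_semicontinuous f ->
  measurable_fun setT (fun x : R => iint (fun v => f (row_cons x v))).
Proof.
move=> f0 lf; apply: lower_semicontinuous_measurable.
apply: (@lower_semicontinuous_iint _ R (fun p => f (row_cons p.1 p.2))) => //.
exact: lower_semicontinuous_comp (@continuous_row_cons d) lf.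
Qed.

Lemma continuous_row_consr d (x : R) :
  continuous (fun v : 'rV[R]_d => row_cons x v).
Proof.
move=> v; exact: continuous_comp (@continuous_pairr _ 'rV[R]_d x v)
  (@continuous_row_cons d (x, v)).
Qed.

Lemma ge0_iintD d (f g : 'rV[R]_d -> \bar R) :
  (forall x, 0 <= f x) -> (forall x, 0 <= g x) ->
  lower_semicontinuous f -> lower_semicontinuous g ->
  iint (f \+ g) = iint f + iint g.
Proof.
elim: d f g => [|d IH] f g f0 g0 lf lg //=.
under eq_integral => x _.
  rewrite (IH (fun v => f (row_cons x v)) (fun v => g (row_cons x v))) //.
  - over.
  - exact: lower_semicontinuous_comp (@continuous_row_consr d x) lf.
  - exact: lower_semicontinuous_comp (@continuous_row_consr d x) lg.
rewrite ge0_integralD // => [x _||x _|]; try exact: iint_ge0.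
all: exact: measurable_iint_row_cons.
Qed.

Lemma ge0_iint_sum d (I : Type) (r : seq I) (P : pred I)
    (F : I -> 'rV[R]_d -> \bar R) :
  (forall i x, 0 <= F i x) -> (forall i, lower_semicontinuous (F i)) ->
  iint (fun x => \sum_(i <- r | P i) F i x) = \sum_(i <- r | P i) iint (F i).
Proof.
move=> F0 lF; elim: r => [|i r IH].
  by rewrite big_nil; under eq_fun do rewrite big_nil; exact: iint0.
rewrite big_cons; under eq_fun do rewrite big_cons.
case: (P i) => //; rewrite -IH ge0_iintD //.
- by move=> x; exact: sume_ge0.
- exact: ge0_lower_semicontinuous_sum.
Qed.

End iterated_integral.

Section simplex.
Context {R : realType} {d : nat}.

Lemma continuous_sum_coord :
  continuous (fun y : 'rV[R]_d => \sum_i y ord0 i).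
Proof.
apply: continuous_big => [|i _]; [exact: add_continuous | exact: coord_continuous].
Qed.

Lemma open_simplex_int : open (@simplex_int R d).
Proof.
rewrite openE => a [a_gt0 a_lt1].
have coord_gt0 : \forall y \near a, forall i, 0 < (y : 'rV[R]_d) ord0 i.
  apply: (@filter_forall _ _ (fun i (y : 'rV[R]_d) => 0 < y ord0 i) (nbhs a)).
  move=> i.
  exact: cvgr_gt _ (@coord_continuous R 1 d ord0 i a) _ (a_gt0 i).
have sum_lt1 : \forall y \near a, \sum_i (y : 'rV[R]_d) ord0 i < 1.
  exact: cvgr_lt _ (continuous_sum_coord (x := a)) _ a_lt1.
exact: filterS (filterI coord_gt0 sum_lt1).
Qed.

Lemma simplex_intW : @simplex_int R d `<=` @simplex R d.
Proof. by move=> a [a_gt0 /ltW]; split => // i; exact/ltW. Qed.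

Lemma compact_simplex : compact (@simplex R d).
Proof.
have -> : @simplex R d =
    \bigcap_(i in [set: 'I_d])
      ((fun y : 'rV[R]_d => y ord0 i) @^-1` [set x | 0 <= x])
    `&` ((fun y : 'rV[R]_d => \sum_i y ord0 i) @^-1` [set x | x <= 1]).
  apply/seteqP; split => y [y_ge0 y_le1]; split => // i; last exact: y_ge0.
  by move=> _; exact: y_ge0.
apply: (@subclosed_compact _ _
  [set y : 'rV[R]_d | forall i, `[0, 1]%classic (y ord0 i)]).
- apply: closedI.
    apply: closed_bigI => i _; apply: closed_comp (@closed_ge _ _) => y _.
    exact: coord_continuous.
  by apply: closed_comp (@closed_le _ _) => y _; exact: continuous_sum_coord.
- apply: (@rV_compact R d (fun=> `[0%R, 1%R]%classic)) => _.
  exact: segment_compact.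
- move=> y [y_ge0 y_le1] i.
  have {}y_ge0 j : 0 <= y ord0 j by exact: y_ge0.
  rewrite /= in_itv /= y_ge0 /=; apply: le_trans y_le1.
  by rewrite (bigD1 i) //= lerDl sumr_ge0.
Qed.

End simplex.

Section pullback.
Context {R : realType} {d N : nat}.
Implicit Types (sigma : 'rV[R]_d -> 'rV[R]_N) (I : {ffun 'I_d -> 'I_N}).

Lemma card_setT_pred : (#|[set: 'I_d.+1]%SET|.-1 = d)%N.
Proof. by rewrite cardsT card_ord. Qed.

Lemma nth_enum_setT_lift (k : nat) (l : 'I_d) :
  (nth ord0 (enum [set: 'I_d.+1]%SET) k == lift ord0 l) = (k == l.+1)%N.
Proof.
have [kd|dk] := ltnP k d.+1.
  by rewrite -val_eqE /= enum_setT -enumT nth_enum_ord.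
rewrite nth_default; last by rewrite -cardE cardsT card_ord.
rewrite -val_eqE /= (negbTE (neq_bump _ _)).
by rewrite gtn_eqF // (leq_ltn_trans (ltn_ord l) dk).
Qed.

Lemma face_param_setT (s : 'rV[R]_(#|[set: 'I_d.+1]%SET|.-1)) (l : 'I_d) :
  @face_param R d [set: _]%SET s ord0 l =
  s ord0 (cast_ord (esym card_setT_pred) l).
Proof.
rewrite /face_param !mxE summxE nth_enum_setT_lift add0r.
under eq_bigr => j _ do rewrite !mxE !nth_enum_setT_lift subr0 eqSS.
rewrite (bigD1 (cast_ord (esym card_setT_pred) l)) //= eqxx mulr1 big1 ?addr0 //.
move=> j jl; case: eqP => [jl'|]; last by rewrite mulr0.
by case/eqP: jl; apply: val_inj.
Qed.

Lemma C1_on_face_setT sigma :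
  C1_on_face sigma [set: 'I_d.+1]%SET -> C1_on (@simplex_int R d) sigma.
Proof.
(* Abstracting [#|setT|.-1] lets [subst] replace it by [d]; [face_param] then
   becomes the identity. *)
rewrite /C1_on_face; move: (@face_param R d [set: _]%SET) face_param_setT.
move: card_setT_pred; move: (#|_|.-1) => n e; subst n => fp fpE.
suff -> : sigma \o fp = sigma by [].
apply/funext => s /=; congr sigma; apply/matrixP => i l.
by rewrite (ord1 i) fpE cast_ord_id.
Qed.

Lemma continuous_pullback_dx (U : set 'rV[R]_d) sigma I :
  C1_on U sigma -> {within U, continuous (pullback_dx sigma I)}.
Proof.
move=> [_ dsigma]; apply/subspace_continuousP => a Ua.
apply: cvg_det => j l; under eq_fun do rewrite mxE; rewrite mxE.
have := (subspace_continuousP _ _).1 (dsigma (delta_mx ord0 l)) a Ua.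
exact: (continuous_cvg _ (@coord_continuous R 1 N ord0 (I j) _)).
Qed.

Lemma bounded_on_simplex sigma (f : 'rV[R]_N -> R) :
  {within @simplex R d, continuous sigma} ->
  {within sigma @` @simplex R d, continuous f} ->
  exists M : nat, forall a, simplex a -> `|f (sigma a)| <= M%:R.
Proof.
move=> cs cf.
have /compact_bounded [M0 [_ M0f]] :=
  continuous_compact cf (continuous_compact cs compact_simplex).
exists (Num.truncn M0).+1 => a sa; apply: M0f (truncnS_gt M0) _ _.
by exists (sigma a) => //; exists a.
Qed.

Lemma pullback_dxE sigma I : increasing I ->
  pullback sigma (fun J _ => (J == I)%:R) = pullback_dx sigma I.
Proof.
move=> incI; apply/funext => a; rewrite /pullback (bigD1 I) //= eqxx mul1r.
by rewrite big1 ?addr0 // => J /andP[_ /negbTE ->]; rewrite mul0r.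
Qed.

Lemma norm_pullback_le sigma f (M : {ffun 'I_d -> 'I_N} -> nat) a :
  (forall I, increasing I -> `|f I (sigma a)| <= (M I)%:R) ->
  `|pullback sigma f a| <=
  \sum_(I | increasing I) (M I)%:R * `|pullback_dx sigma I a|.
Proof.
move=> fM; apply: le_trans (ler_norm_sum _ _ _) _.
by apply: ler_sum => I incI; rewrite normrM ler_wpM2r // fM.
Qed.

Lemma abs_conv_pullback sigma f (M : {ffun 'I_d -> 'I_N} -> nat) :
  C1_on (@simplex_int R d) sigma ->
  (forall I, increasing I -> abs_conv (pullback_dx sigma I)) ->
  (forall I a, increasing I -> simplex_int a -> `|f I (sigma a)| <= (M I)%:R) ->
  abs_conv (pullback sigma f).
Proof.
move=> C dx_conv fM.
(* With integer bounds, [M I * g I] is the sum of [M I] copies of [g I], so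
   additivity of [iint] is all that is needed. *)
pose g I a := (\1_(@simplex_int R d) a * `|pullback_dx sigma I a|)%:E.
have indic_ge0 a : 0 <= \1_(@simplex_int R d) a :> R by rewrite indicE.
have g_ge0 I a : (0 <= g I a)%E by rewrite lee_fin mulr_ge0.
have g_lsc I : lower_semicontinuous (g I).
  apply: lower_semicontinuous_indic_norm; first exact: open_simplex_int.
  exact: continuous_pullback_dx.
rewrite /abs_conv.
apply: (@le_lt_trans _ _
  (iint (fun a => \sum_(I | increasing I) \sum_(k < M I) g I a))).
  apply: le_iint => a; first by rewrite lee_fin mulr_ge0.
  have [ia|nia] := pselect (simplex_int a); last first.
    by rewrite indicE memNset // mul0r; apply: sume_ge0 => I _; exact: sume_ge0.
  rewrite indicE mem_set // mul1r.
  under eq_bigr => I _ do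
    rewrite sumEFin /g indicE mem_set // mul1r sumr_const card_ord -mulr_natl.
  by rewrite sumEFin lee_fin; apply: norm_pullback_le => I incI; exact: fM.
rewrite ge0_iint_sum.
- apply: lte_sum_pinfty => I incI; rewrite ge0_iint_sum //.
  by apply: lte_sum_pinfty => k _; exact: dx_conv.
- by move=> I a; exact: sume_ge0.
- by move=> I; exact: ge0_lower_semicontinuous_sum.
Qed.

End pullback.

Theorem lemma2p3 (R : realType) (d N : nat) (sigma : 'rV[R]_d -> 'rV[R]_N) :
  {within @simplex R d, continuous sigma} ->
  (forall S : {set 'I_d.+1}, S != finset.set0 -> C1_on_face sigma S) ->
  (finite_volume sigma <->
   (forall I : {ffun 'I_d -> 'I_N}, increasing I -> abs_conv (pullback_dx sigma I))).
Proof.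
move=> cs C1.
have C : C1_on (@simplex_int R d) sigma.
  by apply/C1_on_face_setT/C1; apply/set0Pn; exists ord0; rewrite inE.
split=> [FV I incI | dx_conv f cf].
  by rewrite -pullback_dxE //; apply: FV => J _; exact: cst_continuous.
have bounded I : exists M : nat, increasing I ->
    forall a, simplex a -> `|f I (sigma a)| <= M%:R.
  have [incI|_] := boolP (increasing I); last by exists 0%N.
  by have [M fM] := bounded_on_simplex cs (cf I incI); exists M.
have [M fM] := choice bounded.
apply: abs_conv_pullback C dx_conv _ => I a incI ia.
exact/fM/simplex_intW.
Qed.
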